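(* Let $(F,\cdot)$ be a scalar group. (1) If $(F,\boxplus,\cdot)$ is a left near-field, then the map $\rho_\boxplus:F\to F$, $\rho_\boxplus(\alpha)=1\boxplus\alpha$, is a left near-field addition map on $(F,\cdot)$. (2) If $\rho$ is a left near-field addition map on $(F,\cdot)$, then $(F,\boxplus_\rho,\cdot)$ is a left near-field, where $\alpha\boxplus_\rho\beta:=\alpha\,\rho(\alpha^{-1}\beta)$ if $\alpha\ne0$ and $0\boxplus_\rho\beta:=\beta$.
   Context: A scalar group is a tuple $(F,\cdot,1,0,-1)$ where $(F,\cdot,1)$ is a monoid, $0\ne1$, $0\alpha=\alpha0=0$, $\{1,-1\}$ is exactly the solution set of $x^2=1$, and $(F\setminus\{0\},\cdot)$ is a group; $-\alpha:=(-1)\alpha$. A left near-field $(F,\boxplus,\cdot)$: $(F,\boxplus)$ a group with identity $0$, $(F\setminus\{0\},\cdot)$ a group, $0\cdot\alpha=0$, $\gamma(\alpha\boxplus\beta)=\gamma\alpha\boxplus\gamma\beta$. A left near-field addition map on $(F,\cdot)$ is a map $\rho:F\to F$ such that (i) $\rho(0)=1$; (ii) $\rho(-1)=0$; (iii) $\rho(\alpha^{-1})=\alpha^{-1}\rho(\alpha)$ for all $\alpha\ne0$; (iv) $\rho(\alpha\rho(\beta))=\alpha\,\rho(\beta\,\rho((\alpha\beta)^{-1}))$ for all $\alpha,\beta\ne0$. *)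

From mathcomp Require Import ssreflect ssrfun ssrbool eqtype.
Set Implicit Arguments. Unset Strict Implicit. Unset Printing Implicit Defensive.

(* Scalar group (F, mul, one, zero, m1); [inv] is the inverse map of the
   group (F \ {0}, mul) (its value at 0 is irrelevant). *)
Definition scalar_group (F : eqType) (mul : F -> F -> F) (one zero m1 : F)
    (inv : F -> F) : Prop :=
  [/\
      ((forall a b c, mul a (mul b c) = mul (mul a b) c) /\
       (forall a, mul one a = a /\ mul a one = a)),
      zero <> one,
      (forall a, mul zero a = zero /\ mul a zero = zero),
      (forall x, mul x x = one <-> (x = one \/ x = m1)) &
      ((forall a b, a <> zero -> b <> zero -> mul a b <> zero) /\
       (forall a, a <> zero ->
         [/\ inv a <> zero, mul (inv a) a = one & mul a (inv a) = one]))].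

Definition left_nearfield (F : eqType) (add mul : F -> F -> F) (one zero : F)
    (inv : F -> F) : Prop :=
  [/\
      [/\ (forall a b c, add a (add b c) = add (add a b) c),
          (forall a, add zero a = a /\ add a zero = a) &
          (forall a, exists b, add a b = zero /\ add b a = zero)],
      [/\ (forall a b c, mul a (mul b c) = mul (mul a b) c),
          (forall a, mul one a = a /\ mul a one = a),
          one <> zero,
          (forall a b, a <> zero -> b <> zero -> mul a b <> zero) &
          (forall a, a <> zero ->
             [/\ inv a <> zero, mul (inv a) a = one & mul a (inv a) = one])],
      (forall a, mul zero a = zero) &
      (forall g a b, mul g (add a b) = add (mul g a) (mul g b))].

Definition nearfield_addition_map (F : eqType) (mul : F -> F -> F)
    (one zero m1 : F) (inv : F -> F) (rho : F -> F) : Prop :=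
  [/\ rho zero = one,
      rho m1 = zero,
      (forall a, a <> zero -> rho (inv a) = mul (inv a) (rho a)) &
      (forall a b, a <> zero -> b <> zero ->
         rho (mul a (rho b)) = mul a (rho (mul b (rho (inv (mul a b))))))].

Definition rho_add (F : eqType) (mul : F -> F -> F) (zero : F)
    (inv : F -> F) (rho : F -> F) (a b : F) : F :=
  if a == zero then b else mul a (rho (mul (inv a) b)).

(* (1) The additive inverse [n] of 1 satisfies [n n = 1] by left
   distributivity, so [n] is 1 or [m1], and both are central.  Hence [n x] is
   an inverse of [x], and [n a + n b] is an inverse of both [a + b] and
   [b + a], so the addition is commutative; then [n = m1] (if [n = 1], [m1]
   fixes [1 + m1]).  The identities for [1 + _] are left distributivity and
   commutativity.
   (2) Addition via [rho] is left distributive by construction, so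
   [a + b = a (1 + a^-1 b)] reduces everything to sums with first summand 1.
   Axiom (iii) says [x + 1 = 1 + x], which gives commutativity; axiom (iv) at
   [b = a^-1 c] says [1 + (a + c) = a + (c + 1)], which with commutativity is
   associativity with first summand 1. *)
From mathcomp Require Import ssreflect ssrfun ssrbool eqtype.

Set Implicit Arguments.
Unset Strict Implicit.
Unset Printing Implicit Defensive.

Section ScalarGroup.
Variables (F : eqType) (mul : F -> F -> F) (one zero m1 : F) (inv : F -> F).
Hypothesis sgF : scalar_group mul one zero m1 inv.

Lemma mulgA a b c : mul a (mul b c) = mul (mul a b) c.
Proof. by case: sgF => [[]]. Qed.

Lemma mul1g a : mul one a = a.
Proof. by case: sgF => [[_ /(_ a) []]]. Qed.

Lemma mulg1 a : mul a one = a.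
Proof. by case: sgF => [[_ /(_ a) []]]. Qed.

Lemma mul0g a : mul zero a = zero.
Proof. by case: sgF => _ _ /(_ a) []. Qed.

Lemma mulg0 a : mul a zero = zero.
Proof. by case: sgF => _ _ /(_ a) []. Qed.

Lemma one_neq0 : one <> zero.
Proof. by case: sgF => _ z1 _ _ _ e; apply: z1. Qed.

Lemma mulg_neq0 a b : a <> zero -> b <> zero -> mul a b <> zero.
Proof. by case: sgF => _ _ _ _ [h _]; apply: h. Qed.

Lemma invg_neq0 a : a <> zero -> inv a <> zero.
Proof. by case: sgF => _ _ _ _ [_ h] /h []. Qed.

Lemma mulVg a : a <> zero -> mul (inv a) a = one.
Proof. by case: sgF => _ _ _ _ [_ h] /h []. Qed.

Lemma mulgV a : a <> zero -> mul a (inv a) = one.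
Proof. by case: sgF => _ _ _ _ [_ h] /h []. Qed.

Lemma sqrg_eq1 x : mul x x = one <-> x = one \/ x = m1.
Proof. by case: sgF. Qed.

Lemma mulKg a b : a <> zero -> mul (inv a) (mul a b) = b.
Proof. by move=> a0; rewrite mulgA mulVg // mul1g. Qed.

Lemma mulKVg a b : a <> zero -> mul a (mul (inv a) b) = b.
Proof. by move=> a0; rewrite mulgA mulgV // mul1g. Qed.

Lemma mulgI a x y : a <> zero -> mul a x = mul a y -> x = y.
Proof. by move=> a0 e; rewrite -(mulKg x a0) e mulKg. Qed.

Lemma invg1 : inv one = one.
Proof. by rewrite -[inv one]mulg1 mulVg //; apply: one_neq0. Qed.

Lemma invgK a : a <> zero -> inv (inv a) = a.
Proof.
move=> a0; apply: (mulgI (invg_neq0 a0)).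
by rewrite mulgV ?mulVg //; apply: invg_neq0.
Qed.

Lemma invgM a b : a <> zero -> b <> zero -> inv (mul a b) = mul (inv b) (inv a).
Proof.
move=> a0 b0; have ab0 := mulg_neq0 a0 b0; apply: (mulgI ab0).
by rewrite mulgV // -mulgA mulKVg // mulgV.
Qed.

Lemma mul_fixed_eq1 x y : mul x y = y -> y <> zero -> x = one.
Proof. by move=> e y0; rewrite -[x]mulg1 -(mulgV y0) mulgA e. Qed.

Lemma sqrg_m1 : mul m1 m1 = one.
Proof. by apply/sqrg_eq1; right. Qed.

(* The conjugate [g m1 g^-1] squares to 1, so it is 1 or [m1]; if it is 1
   then [m1 = 1]. *)
Lemma m1_central g : mul g m1 = mul m1 g.
Proof.
have [->|/eqP g0] := eqVneq g zero; first by rewrite mul0g mulg0.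
set c := mul (mul g m1) (inv g).
have cg : mul c g = mul g m1 by rewrite -mulgA mulVg // mulg1.
have /sqrg_eq1 [c1|cm1] : mul c c = one.
  by rewrite /c -!mulgA (mulgA (inv g)) mulVg // mul1g (mulgA m1) sqrg_m1 mul1g mulgV.
- have m1_1 : m1 = one by apply: (mulgI g0); rewrite -cg c1 mul1g mulg1.
  by rewrite m1_1 mulg1 mul1g.
- by rewrite -cg cm1.
Qed.

Section NearFieldAdditionMap.
Variable add : F -> F -> F.
Hypothesis nfF : left_nearfield add mul one zero inv.

Lemma addA a b c : add a (add b c) = add (add a b) c.
Proof. by case: nfF => [[]]. Qed.

Lemma add0 a : add zero a = a.
Proof. by case: nfF => [[_ /(_ a) []]]. Qed.

Lemma addr0 a : add a zero = a.
Proof. by case: nfF => [[_ /(_ a) []]]. Qed.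

Lemma mulDr g a b : mul g (add a b) = add (mul g a) (mul g b).
Proof. by case: nfF. Qed.

Lemma addI a : injective (add a).
Proof.
case: nfF => [[_ _ /(_ a) [b [_ ba0]]]] _ _ _ x y e.
by rewrite -[x]add0 -ba0 -addA e addA ba0 add0.
Qed.

Lemma addNC a b : add a b = zero -> add b a = zero.
Proof.
case: nfF => [[_ _ /(_ a) [c [ac0 ca0]]]] _ _ _ ab0.
by have -> : b = c by apply: (addI (a := a)); rewrite ab0.
Qed.

Lemma opp1_sqr n : add one n = zero -> mul n n = one.
Proof.
move=> e; apply: (addI (a := n)).
by rewrite -{1}[n]mulg1 -mulDr e mulg0 addNC.
Qed.

Lemma opp1_central n g : add one n = zero -> mul g n = mul n g.
Proof.
move=> /opp1_sqr /sqrg_eq1 [->|->]; last exact: m1_central.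
by rewrite mul1g mulg1.
Qed.

Lemma addNopp1 n x : add one n = zero -> add (mul n x) x = zero.
Proof.
move=> e; apply: addNC.
by rewrite -(opp1_central x e) -{1}[x]mulg1 -mulDr e mulg0.
Qed.

Lemma addC a b : add a b = add b a.
Proof.
case: nfF => [[_ _ /(_ one) [n [e _]]]] _ _ _.
apply: (addI (a := add (mul n a) (mul n b))).
have -> : add (add (mul n a) (mul n b)) (add a b) = zero.
  by rewrite -mulDr addNopp1.
by rewrite -addA (addA (mul n b)) addNopp1 // add0 addNopp1.
Qed.

Lemma add1m1 : add one m1 = zero.
Proof.
case: nfF => [[_ _ /(_ one) [n [e _]]]] _ _ _.
have /sqrg_eq1 [n1|<- //] := opp1_sqr e.
have [//|/eqP s0] := eqVneq (add one m1) zero.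
have : mul m1 (add one m1) = add one m1 by rewrite mulDr mulg1 sqrg_m1 addC.
by move=> /mul_fixed_eq1 /(_ s0) m1_1; rewrite m1_1 -{2}n1.
Qed.

Lemma nearfield_addition_map_add1 :
  nearfield_addition_map mul one zero m1 inv (add one).
Proof.
split=> [|||a b a0 b0]; first exact: addr0; first exact: add1m1.
  by move=> a a0; rewrite mulDr mulg1 mulVg // addC.
rewrite !mulDr !mulg1 mulgA mulgV; last exact: mulg_neq0.
by rewrite addC addA.
Qed.

End NearFieldAdditionMap.

Section AdditionMapNearField.
Variable rho : F -> F.
Hypothesis rhoF : nearfield_addition_map mul one zero m1 inv rho.
Local Notation radd := (rho_add mul zero inv rho).

Lemma rho_add0l b : radd zero b = b.
Proof. by rewrite /rho_add eqxx. Qed.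

Lemma rho_addE a b : a <> zero -> radd a b = mul a (rho (mul (inv a) b)).
Proof. by rewrite /rho_add; case: eqP. Qed.

Lemma rho_add0r a : radd a zero = a.
Proof.
have [->|/eqP a0] := eqVneq a zero; first exact: rho_add0l.
by case: rhoF => r0 _ _ _; rewrite rho_addE // mulg0 r0 mulg1.
Qed.

Lemma rho_add1l x : radd one x = rho x.
Proof. by rewrite rho_addE ?invg1 ?mul1g //; apply: one_neq0. Qed.

Lemma mulDr_rho_add g a b : mul g (radd a b) = radd (mul g a) (mul g b).
Proof.
have [->|/eqP g0] := eqVneq g zero; first by rewrite !mul0g rho_add0l.
have [->|/eqP a0] := eqVneq a zero; first by rewrite rho_add0l mulg0 rho_add0l.
rewrite !rho_addE ?invgM //; last exact: mulg_neq0.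
by rewrite -(mulgA (inv a)) mulKg // mulgA.
Qed.

Lemma rho_add_scale a b : a <> zero -> radd a b = mul a (radd one (mul (inv a) b)).
Proof. by move=> a0; rewrite mulDr_rho_add mulg1 mulKVg. Qed.

Lemma rho_addC1 x : radd x one = radd one x.
Proof.
have [->|/eqP x0] := eqVneq x zero; first by rewrite rho_add0l rho_add0r.
case: rhoF => _ _ rinv _.
rewrite rho_addE // mulg1 rho_add1l.
by have := rinv _ (invg_neq0 x0); rewrite invgK // => ->.
Qed.

Lemma rho_addC a b : radd a b = radd b a.
Proof.
have [->|/eqP a0] := eqVneq a zero; first by rewrite rho_add0l rho_add0r.
by rewrite rho_add_scale // -rho_addC1 mulDr_rho_add mulg1 mulKVg.
Qed.

(* Axiom (iv) at [b = a^-1 c]. *)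
Lemma rho_add1_shift a c : a <> zero -> c <> zero ->
  radd one (radd a c) = radd a (radd c one).
Proof.
case: rhoF => _ _ _ rmul a0 c0.
have := rmul a _ a0 (mulg_neq0 (invg_neq0 a0) c0); rewrite mulKVg // => e.
by rewrite rho_add1l !rho_addE // e mulg1 mulgA.
Qed.

Lemma rho_add1A y z : radd one (radd y z) = radd (radd one y) z.
Proof.
have [->|/eqP y0] := eqVneq y zero; first by rewrite !rho_add0l rho_add0r.
have [->|/eqP z0] := eqVneq z zero; first by rewrite !rho_add0r.
by rewrite (rho_addC y z) rho_add1_shift // rho_addC1 rho_addC.
Qed.

Lemma rho_addA x y z : radd x (radd y z) = radd (radd x y) z.
Proof.
have [->|/eqP x0] := eqVneq x zero; first by rewrite !rho_add0l.
rewrite (rho_add_scale _ x0) (mulDr_rho_add (inv x)) rho_add1A mulDr_rho_add.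
by rewrite -rho_add_scale // mulKVg.
Qed.

Lemma rho_add_mulm1 a : radd a (mul a m1) = zero.
Proof.
have [->|/eqP a0] := eqVneq a zero; first by rewrite mul0g rho_add0l.
by case: rhoF => _ rm1 _ _; rewrite rho_addE // mulKg // rm1 mulg0.
Qed.

Lemma left_nearfield_rho_add : left_nearfield radd mul one zero inv.
Proof.
split.
- split=> [||a]; first exact: rho_addA; first by move=> a; rewrite rho_add0l rho_add0r.
  by exists (mul a m1); rewrite rho_add_mulm1 rho_addC rho_add_mulm1.
- split=> //; [exact: mulgA | by move=> a; rewrite mul1g mulg1 | exact: one_neq0
  | exact: mulg_neq0 | by move=> a a0; split; [apply: invg_neq0 | apply: mulVg | apply: mulgV]].
- exact: mul0g.
- exact: mulDr_rho_add.
Qed.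

End AdditionMapNearField.

End ScalarGroup.

Theorem mainTheorem14 (F : eqType) (mul : F -> F -> F) (one zero m1 : F)
    (inv : F -> F) :
  scalar_group mul one zero m1 inv ->
  (forall add : F -> F -> F, left_nearfield add mul one zero inv ->
     nearfield_addition_map mul one zero m1 inv (fun a => add one a)) /\
  (forall rho : F -> F, nearfield_addition_map mul one zero m1 inv rho ->
     left_nearfield (rho_add mul zero inv rho) mul one zero inv).
Proof.
move=> sgF; split=> [add nfF | rho rhoF].
- exact (nearfield_addition_map_add1 sgF nfF).
- exact (left_nearfield_rho_add sgF rhoF).
Qed.
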